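(* Let $\widetilde{\mathcal{A}}^+,\widetilde{\mathcal{A}}^-\subseteq\mathbb{R}^d$. If the problem $$\max_{\|y\|_*\le1,\ b\in\mathbb{R}} h(y,b;\widetilde{\mathcal{A}}^+,\widetilde{\mathcal{A}}^-)$$ has an optimal solution and a positive optimal value, then every optimal solution $(\hat y,\hat b)$ satisfies $\|\hat y\|_*=1$. If moreover the norm $\|\cdot\|$ and its dual $\|\cdot\|_*$ are both strictly convex (i.e. $\|\beta w+(1-\beta)z\|<\beta\|w\|+(1-\beta)\|z\|$ whenever $\beta\in(0,1)$ and $w,z$ are not collinear, and likewise for $\|\cdot\|_*$), then the optimal solution is unique.
   Context: $\|\cdot\|$ is a norm on $\mathbb{R}^d$ with dual norm $\|y\|_*=\max_{\|w\|\le1}y^\top w$. For sets $\widetilde{\mathcal{A}}^+,\widetilde{\mathcal{A}}^-\subseteq\mathbb{R}^d$ the margin function is $$h(y,b;\widetilde{\mathcal{A}}^+,\widetilde{\mathcal{A}}^-)=\min\Big\{\min_{x\in\widetilde{\mathcal{A}}^+}(y^\top x+b),\ \min_{x\in\widetilde{\mathcal{A}}^-}(-y^\top x-b)\Big\},$$ which equals $\tfrac12\big(\min_{x\in\widetilde{\mathcal{A}}^+}y^\top x-\max_{x\in\widetilde{\mathcal{A}}^-}y^\top x\big)-\big|b+\tfrac12\big(\min_{x\in\widetilde{\mathcal{A}}^+}y^\top x+\max_{x\in\widetilde{\mathcal{A}}^-}y^\top x\big)\big|$. *)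

From HB Require Import structures.
From mathcomp Require Import all_boot all_order all_algebra.
From mathcomp Require Import all_classical all_reals all_analysis.
Set Implicit Arguments. Unset Strict Implicit. Unset Printing Implicit Defensive.
Import Order.TTheory GRing.Theory Num.Theory.
Local Open Scope classical_set_scope.
Local Open Scope ring_scope.

Section Defs.
Variables (R : realType) (d : nat).
Local Notation V := 'rV[R]_d.

Definition dotp (y x : V) : R := \sum_(i < d) y 0 i * x 0 i.

Definition is_norm (N : V -> R) : Prop :=
  [/\ forall x, 0 <= N x,
      forall x, N x = 0 -> x = 0,
      forall (a : R) x, N (a *: x) = `|a| * N x
    & forall x z, N (x + z) <= N x + N z].

Definition dual_norm (N : V -> R) (y : V) : R :=
  sup [set dotp y w | w in [set w | N w <= 1]].

Definition collinear (w z : V) : Prop :=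
  exists a b : R, (a != 0 \/ b != 0) /\ a *: w + b *: z = 0.

Definition strictly_convex (N : V -> R) : Prop :=
  forall (beta : R) (w z : V), 0 < beta < 1 -> ~ collinear w z ->
    N (beta *: w + (1 - beta) *: z) < beta * N w + (1 - beta) * N z.

(* margin function h(y,b; A+, A-), with min read as the infimum in \bar R *)
Definition margin (Ap Am : set V) (y : V) (b : R) : \bar R :=
  mine (ereal_inf [set (dotp y x + b)%:E | x in Ap])
       (ereal_inf [set (- dotp y x - b)%:E | x in Am]).

Definition opt_value (N : V -> R) (Ap Am : set V) : \bar R :=
  ereal_sup [set margin Ap Am p.1 p.2 | p in [set p : V * R | dual_norm N p.1 <= 1]].

Definition is_optimal (N : V -> R) (Ap Am : set V) (y : V) (b : R) : Prop :=
  dual_norm N y <= 1 /\ margin Ap Am y b = opt_value N Ap Am.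

End Defs.

From HB Require Import structures.
From mathcomp Require Import all_boot all_order all_algebra.
From mathcomp Require Import all_classical all_reals all_analysis.
From mathcomp Require Import lra.
Set Implicit Arguments. Unset Strict Implicit. Unset Printing Implicit Defensive.
Import Order.TTheory GRing.Theory Num.Theory.
Local Open Scope classical_set_scope.
Local Open Scope ring_scope.

(* Any optimal (y, b) has ||y||_* = 1: otherwise scaling (y, b) by 2 / (1 + ||y||_* ) > 1
   keeps it feasible and multiplies the positive margin by that factor.  The set of
   optimal solutions is convex, so for two optima y1, y2 the midpoint is optimal too and
   has dual norm 1; strict convexity of the dual norm then forces y1, y2 to be collinear, hence
   y1 = y2 or y1 = -y2.  The latter contradicts positivity of the margin on points of
   both classes, and for y1 = y2 averaging b1 <> b2 would strictly improve the margin. *)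

Section Dotp.
Variables (R : realType) (d : nat).
Local Notation V := 'rV[R]_d.

Lemma dotpDl (y z x : V) : dotp (y + z) x = dotp y x + dotp z x.
Proof. by rewrite /dotp -big_split; apply: eq_bigr => i _; rewrite mxE mulrDl. Qed.

Lemma dotpZl (a : R) (y x : V) : dotp (a *: y) x = a * dotp y x.
Proof. by rewrite /dotp mulr_sumr; apply: eq_bigr => i _; rewrite mxE mulrA. Qed.

Lemma dotpNl (y x : V) : dotp (- y) x = - dotp y x.
Proof. by rewrite -scaleN1r dotpZl mulN1r. Qed.

Lemma dotpNr (y x : V) : dotp y (- x) = - dotp y x.
Proof. by rewrite /dotp -sumrN; apply: eq_bigr => i _; rewrite mxE mulrN. Qed.

Lemma dotp0r (y : V) : dotp y 0 = 0.
Proof. by rewrite /dotp big1 // => i _; rewrite mxE mulr0. Qed.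

End Dotp.

Section DualNorm.
Variables (R : realType) (d : nat) (N : 'rV[R]_d -> R).
Local Notation V := 'rV[R]_d.
Hypothesis normN : is_norm N.

Lemma norm0 : N 0 = 0.
Proof. by case: normN => _ _ hZ _; rewrite -(scale0r (0 : V)) hZ normr0 mul0r. Qed.

Lemma normNv (w : V) : N (- w) = N w.
Proof. by case: normN => _ _ hZ _; rewrite -scaleN1r hZ normrN normr1 mul1r. Qed.

Definition dual_values (y : V) : set R := [set dotp y w | w in [set w | N w <= 1]].

Lemma dual_values0 (y : V) : dual_values y 0.
Proof. by exists 0; rewrite /= ?norm0 ?dotp0r. Qed.

(* [sup] returns 0 on sets without upper bound. *)
Lemma dual_norm_unbounded (y : V) : ~ has_ubound (dual_values y) -> dual_norm N y = 0.
Proof. by move=> h; apply: sup_out => -[]. Qed.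

Lemma dual_norm_bounded (y : V) : dual_norm N y != 0 -> has_ubound (dual_values y).
Proof. by move=> h; apply/not_notP => /dual_norm_unbounded/eqP; apply/negP. Qed.

Lemma dual_norm_ge0 (y : V) : 0 <= dual_norm N y.
Proof.
have [hb|hb] := pselect (has_ubound (dual_values y)).
  by apply: (ub_le_sup hb); exact: dual_values0.
by rewrite dual_norm_unbounded.
Qed.

Lemma dotp_le_dual_norm (y w : V) :
  has_ubound (dual_values y) -> N w <= 1 -> dotp y w <= dual_norm N y.
Proof. by move=> hb hw; apply: (ub_le_sup hb); exists w. Qed.

Lemma normr_dotp_le_dual_norm (y w : V) :
  has_ubound (dual_values y) -> N w <= 1 -> `|dotp y w| <= dual_norm N y.
Proof.
move=> hb hw; rewrite ler_norml !dotp_le_dual_norm // andbT.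
by rewrite lerNl -dotpNr dotp_le_dual_norm // normNv.
Qed.

Lemma dual_values_ubound (a : R) (y : V) : has_ubound (dual_values y) ->
  ubound (dual_values (a *: y)) (`|a| * dual_norm N y).
Proof.
move=> hb _ [w hw <-]; rewrite dotpZl (le_trans (ler_norm _)) // normrM.
by rewrite ler_wpM2l // normr_dotp_le_dual_norm.
Qed.

Lemma dual_normZ (a : R) (y : V) : dual_norm N (a *: y) = `|a| * dual_norm N y.
Proof.
have [->|a0] := eqVneq a 0.
  rewrite normr0 mul0r; apply: le_anti; rewrite dual_norm_ge0 andbT.
  by apply: ge_sup; [exists 0; exact: dual_values0 | move=> _ [w _ <-]; rewrite dotpZl mul0r].
have ya : y = a^-1 *: (a *: y) by rewrite scalerA mulVf // scale1r.
have [hb|hb] := pselect (has_ubound (dual_values y)); last first.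
  have hab : ~ has_ubound (dual_values (a *: y)).
    move=> hab; apply: hb; rewrite ya.
    by exists (`|a^-1| * dual_norm N (a *: y)); exact: dual_values_ubound.
  by rewrite !dual_norm_unbounded // mulr0.
have hab : has_ubound (dual_values (a *: y)).
  by exists (`|a| * dual_norm N y); exact: dual_values_ubound.
apply: le_anti; rewrite ge_sup /=; [|by exists 0; exact: dual_values0|exact: dual_values_ubound].
rewrite -ler_pdivlMl ?normr_gt0 // -normfV {1}ya.
by apply: ge_sup; [exists 0; exact: dual_values0|exact: dual_values_ubound].
Qed.

Lemma dual_norm_convex (lam : R) (y1 y2 : V) : 0 <= lam <= 1 ->
  has_ubound (dual_values y1) -> has_ubound (dual_values y2) ->
  dual_norm N (lam *: y1 + (1 - lam) *: y2) <=
    lam * dual_norm N y1 + (1 - lam) * dual_norm N y2.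
Proof.
move=> /andP[lam0 lam1] hb1 hb2.
apply: ge_sup; first by exists 0; exact: dual_values0.
move=> _ [w hw <-]; rewrite dotpDl !dotpZl.
by rewrite lerD // ler_wpM2l ?subr_ge0 // dotp_le_dual_norm.
Qed.

Lemma collinear_dual_norm1 (y1 y2 : V) : dual_norm N y1 = 1 -> dual_norm N y2 = 1 ->
  collinear y1 y2 -> y1 = y2 \/ y1 = - y2.
Proof.
move=> d1 d2 [a [c [ac0 hlin]]].
have hyc : a *: y1 = (- c) *: y2.
  by apply/eqP; rewrite scaleNr -subr_eq0 opprK hlin.
have hac : `|a| = `|c|.
  by move: (congr1 (dual_norm N) hyc); rewrite !dual_normZ d1 d2 !mulr1 normrN.
have a0 : a != 0.
  by case: ac0 => // c0; rewrite -normr_eq0 hac normr_eq0.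
have -> : y1 = (a^-1 * - c) *: y2.
  by rewrite -scalerA -hyc scalerA mulVf ?scale1r.
have : `|a^-1 * - c| = 1 by rewrite normrM normrN normfV -hac mulVf ?normr_eq0.
move=> /eqP; rewrite eqr_norml ler01 andbT => /orP[]/eqP ->.
  by left; rewrite scale1r.
by right; rewrite scaleN1r.
Qed.

End DualNorm.

Section Margin.
Variables (R : realType) (d : nat) (Ap Am : set 'rV[R]_d).
Local Notation V := 'rV[R]_d.
Local Notation margin := (margin Ap Am).

Lemma margin_le_pos (y x : V) (b : R) : Ap x -> (margin y b <= (dotp y x + b)%:E)%E.
Proof. by move=> hx; rewrite ge_min ereal_inf_lbound //; exists x. Qed.

Lemma margin_le_neg (y x : V) (b : R) : Am x -> (margin y b <= (- dotp y x - b)%:E)%E.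
Proof. by move=> hx; rewrite ge_min orbC ereal_inf_lbound //; exists x. Qed.

Lemma margin_geP (y : V) (b c : R) :
  (c%:E <= margin y b)%E <->
  (forall x, Ap x -> c <= dotp y x + b) /\ (forall x, Am x -> c <= - dotp y x - b).
Proof.
split=> [hc|[hp hn]].
  by split=> x hx; rewrite -lee_fin (le_trans hc) ?margin_le_pos ?margin_le_neg.
by rewrite le_min; apply/andP; split; apply: le_ereal_inf_tmp => _ [x hx <-];
  rewrite lee_fin; [apply: hp | apply: hn].
Qed.

Lemma margin_scale_ge (t c : R) (y : V) (b : R) : 0 <= t ->
  (c%:E <= margin y b)%E -> ((t * c)%:E <= margin (t *: y) (t * b))%E.
Proof.
move=> t0 /margin_geP[hp hn]; apply/margin_geP; split=> x hx; rewrite dotpZl.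
  by rewrite -mulrDr ler_wpM2l ?hp.
by rewrite -mulrN -mulrBr ler_wpM2l ?hn.
Qed.

Lemma margin_convex_ge (lam c : R) (y1 y2 : V) (b1 b2 : R) : 0 <= lam <= 1 ->
  (c%:E <= margin y1 b1)%E -> (c%:E <= margin y2 b2)%E ->
  (c%:E <= margin (lam *: y1 + (1 - lam) *: y2) (lam * b1 + (1 - lam) * b2))%E.
Proof.
move=> /andP[lam0 lam1] /margin_geP[hp1 hn1] /margin_geP[hp2 hn2].
have lam1' : 0 <= 1 - lam by rewrite subr_ge0.
apply/margin_geP; split=> x hx; rewrite dotpDl !dotpZl.
  have := ler_wpM2l lam0 (hp1 x hx); have := ler_wpM2l lam1' (hp2 x hx); nra.
have := ler_wpM2l lam0 (hn1 x hx); have := ler_wpM2l lam1' (hn2 x hx); nra.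
Qed.

Variable N : V -> R.

Lemma margin_le_opt_value (y : V) (b : R) :
  dual_norm N y <= 1 -> (margin y b <= opt_value N Ap Am)%E.
Proof. by move=> hy; apply: ereal_sup_ubound; exists (y, b). Qed.

Lemma opt_value_pos_fin (y : V) (b : R) : Ap !=set0 -> is_optimal N Ap Am y b ->
  (0 < opt_value N Ap Am)%E -> exists2 v : R, opt_value N Ap Am = v%:E & 0 < v.
Proof.
move=> [x hx] [_ <-]; have := margin_le_pos y b hx.
by case: (margin y b) => [v _ v0| |] //; exists v.
Qed.

End Margin.

Section Optimal.
Variables (R : realType) (d : nat) (N : 'rV[R]_d -> R) (Ap Am : set 'rV[R]_d).
Local Notation V := 'rV[R]_d.
Local Notation margin := (margin Ap Am).
Local Notation optimal := (is_optimal N Ap Am).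
Hypothesis normN : is_norm N.
Variable v : R.
Hypotheses (opt_valueE : opt_value N Ap Am = v%:E) (v_gt0 : 0 < v).

Lemma optimalE (y : V) (b : R) :
  optimal y b <-> dual_norm N y <= 1 /\ (v%:E <= margin y b)%E.
Proof.
split=> [[hy ->]|[hy hv]]; first by rewrite opt_valueE.
by split=> //; apply: le_anti; rewrite margin_le_opt_value // opt_valueE.
Qed.

Lemma optimal_dual_norm1 (y : V) (b : R) : optimal y b -> dual_norm N y = 1.
Proof.
move=> /optimalE[hy hv]; apply/eqP; rewrite eq_le hy leNgt; apply/negP => hlt.
have D0 := dual_norm_ge0 normN y.
pose t := 2 / (1 + dual_norm N y).
have t1 : 1 < t by rewrite ltr_pdivlMr ?mul1r; lra.
have hty : dual_norm N (t *: y) <= 1.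
  rewrite dual_normZ // ger0_norm; last lra.
  by rewrite mulrAC ler_pdivrMr ?mul1r; lra.
have := le_trans (margin_scale_ge (ltW (lt_trans ltr01 t1)) hv)
  (margin_le_opt_value Ap Am (t * b) hty).
by rewrite opt_valueE lee_fin leNgt ltr_pMl ?t1.
Qed.

Lemma optimal_convex (lam : R) (y1 y2 : V) (b1 b2 : R) : 0 <= lam <= 1 ->
  optimal y1 b1 -> optimal y2 b2 ->
  optimal (lam *: y1 + (1 - lam) *: y2) (lam * b1 + (1 - lam) * b2).
Proof.
move=> lam01 h1 h2; have d1 := optimal_dual_norm1 h1; have d2 := optimal_dual_norm1 h2.
case/optimalE: h1 => _ hv1; case/optimalE: h2 => _ hv2.
have hb1 : has_ubound (dual_values N y1) by apply: dual_norm_bounded; rewrite d1 oner_neq0.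
have hb2 : has_ubound (dual_values N y2) by apply: dual_norm_bounded; rewrite d2 oner_neq0.
apply/optimalE; split; last exact: margin_convex_ge.
by rewrite (le_trans (dual_norm_convex normN lam01 hb1 hb2)) // d1 d2 !mulr1 subrKC.
Qed.

Lemma optimal_eq_or_opp (y1 y2 : V) (b1 b2 : R) : strictly_convex (dual_norm N) ->
  optimal y1 b1 -> optimal y2 b2 -> y1 = y2 \/ y1 = - y2.
Proof.
move=> hsc h1 h2; have d1 := optimal_dual_norm1 h1; have d2 := optimal_dual_norm1 h2.
apply: (collinear_dual_norm1 normN d1 d2); apply/not_notP => hnc.
have half01 : 0 < (2^-1 : R) < 1 by apply/andP; split; lra.
have half01' : 0 <= (2^-1 : R) <= 1 by apply/andP; split; lra.
have := hsc _ _ _ half01 hnc.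
by rewrite (optimal_dual_norm1 (optimal_convex half01' h1 h2)) d1 d2 !mulr1 subrKC ltxx.
Qed.

Lemma optimal_not_opp (y : V) (b1 b2 : R) : Ap !=set0 -> Am !=set0 ->
  optimal y b1 -> ~ optimal (- y) b2.
Proof.
move=> [xp hxp] [xm hxm] /optimalE[_ /margin_geP[hp1 hn1]] /optimalE[_ /margin_geP[hp2 hn2]].
suff : v <= 0 by rewrite leNgt v_gt0.
(* the four margin bounds at xp and xm sum to 4 v <= 0 *)
have := hp1 _ hxp; have := hp2 _ hxp; have := hn1 _ hxm; have := hn2 _ hxm.
rewrite !dotpNl opprK; lra.
Qed.

(* Averaging two offsets of the same direction raises the margin by half their gap. *)
Lemma optimal_offset_unique (y : V) (b1 b2 : R) : optimal y b1 -> optimal y b2 -> b1 = b2.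
Proof.
wlog b12 : b1 b2 / b1 <= b2 => [hwlog h1 h2|].
  have [b12|/ltW b21] := leP b1 b2; first exact: hwlog.
  exact/esym/hwlog.
move=> /optimalE[hy /margin_geP[hp1 _]] /optimalE[_ /margin_geP[_ hn2]].
apply/eqP; rewrite eq_le b12 /=.
have : ((v + (b2 - b1) / 2)%:E <= margin y ((b1 + b2) / 2))%E.
  by apply/margin_geP; split=> x hx; [have := hp1 x hx | have := hn2 x hx]; lra.
move/le_trans/(_ (margin_le_opt_value Ap Am _ hy)); rewrite opt_valueE lee_fin; lra.
Qed.

End Optimal.

Theorem mainTheorem4 (R : realType) (d : nat) (N : 'rV[R]_d -> R)
    (Ap Am : set 'rV[R]_d) :
  is_norm N -> Ap !=set0 -> Am !=set0 ->
  (exists y b, is_optimal N Ap Am y b) ->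
  (0 < opt_value N Ap Am)%E ->
  (forall y b, is_optimal N Ap Am y b -> dual_norm N y = 1) /\
  (strictly_convex N -> strictly_convex (dual_norm N) ->
     forall y1 b1 y2 b2, is_optimal N Ap Am y1 b1 -> is_optimal N Ap Am y2 b2 ->
       y1 = y2 /\ b1 = b2).
Proof.
move=> normN Ap0 Am0 [y0 [b0 h0]] opt_gt0.
have [v opt_valueE v_gt0] := opt_value_pos_fin Ap0 h0 opt_gt0.
split=> [y b|_ dual_sc y1 b1 y2 b2 h1 h2].
  exact: (optimal_dual_norm1 normN opt_valueE v_gt0).
have [y12|y12] := optimal_eq_or_opp normN opt_valueE v_gt0 dual_sc h1 h2; subst y1.
  by split=> //; exact: (optimal_offset_unique opt_valueE h1 h2).
by case: (optimal_not_opp opt_valueE v_gt0 Ap0 Am0 h2 h1).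
Qed.
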